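(* Let $n\ge3$ and suppose $T=T_\lambda(r,m)$ acts linearly and inner faithfully on $\Bbbk\overline{Q}$ so that $g$ acts by a rotation: $g\cdot e_i=e_{i+d}$, $g\cdot a_i=\mu_ia_{i+d}$, $g\cdot a_i^*=\mu_i^*a^*_{i+d}$ for some integer $0<d\le n-1$ and $\mu_i,\mu_i^*\in\Bbbk^\times$. Let $\sigma$ be the quiver-Taft map of the action. If $n\ne4$ or $d\ne2$, then $\sigma^r(a)=0$ for every arrow $a$ of $\overline{Q}$.
   Context: Let $\Bbbk$ be a field, $r>1$ and $m$ positive integers with $r\mid m$, and $\lambda\in\Bbbk$ a primitive $r$-th root of unity, with $r$ coprime to the characteristic of $\Bbbk$. The generalized Taft algebra $T=T_\lambda(r,m)$ is the Hopf algebra generated by $g,x$ with relations $gx=\lambda xg$, $g^m=1$, $x^r=0$, $\Delta(g)=g\otimes g$, $\Delta(x)=1\otimes x+x\otimes g$, $\varepsilon(g)=1,\varepsilon(x)=0$, $S(g)=g^{-1}$, $S(x)=-xg^{-1}$. An action of $T$ on an algebra $A$ is a $T$-module algebra structure; so $g$ acts by an algebra automorphism and $x\cdot(ab)=a(x\cdot b)+(x\cdot a)(g\cdot b)$. It is inner faithful if no nonzero Hopf ideal $I$ of $T$ satisfies $I\cdot A=0$. Vertex indices are taken modulo $n$. $\overline{Q}$ has vertices $0,\dots,n-1$ and arrows $a_i:i\to i+1$, $a_i^*:i+1\to i$; in $\Bbbk\overline{Q}$, $e_i$ is the trivial path at $i$, $s(a),t(a)$ source and target, and $pq$ is concatenation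 ($p$ then $q$) if $t(p)=s(q)$, else $0$. A linear action: $g$ acts by a path-length-preserving automorphism ($g\cdot e_i=e_{g\cdot i}$) and $x$ maps vertices into the span of vertices and arrows into the span of vertices and arrows. Then there are scalars $\gamma_i$ with $x\cdot e_i=\gamma_ie_i-\gamma_i\lambda^{-1}e_{g\cdot i}$; the quiver-Taft map $\sigma$ is the linear map on the span of vertices and arrows with $\sigma(e_i)=0$ and $\sigma(a)=x\cdot a-\gamma_{t(a)}a+\gamma_{s(a)}\lambda^{-1}(g\cdot a)$ for arrows $a$; $\sigma^r$ is its $r$-fold iterate. *)

From HB Require Import structures.
From mathcomp Require Import all_boot all_order all_algebra.
Import GRing.Theory.
Local Open Scope ring_scope.

(* The generalized Taft algebra T = T_lam(r,m), given concretely by    *)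
(* its PBW basis g^i x^j (i < m, j < r).  An element of T is the       *)
Section Taft.
Variables (k : fieldType) (m r : nat) (lam : k).

Definition TB := ('I_m * 'I_r)%type.
Definition Telt := TB -> k.

Definition tzero : Telt := fun _ => 0.
Definition tadd (u v : Telt) : Telt := fun b => u b + v b.
Definition tscale (c : k) (u : Telt) : Telt := fun b => c * u b.
Definition tbasis (b : TB) : Telt := fun c => (c == b)%:R.

(* (g^i x^j)(g^i' x^j') = lam^(-j i') g^(i+i' mod m) x^(j+j')   (0 if j+j' >= r);
   this encodes  gx = lam xg,  g^m = 1,  x^r = 0. *)
Definition tmulB (b1 b2 : TB) : Telt := fun c =>
  if ((c.1 : nat) == ((b1.1 + b2.1) %% m)%N) && ((c.2 : nat) == (b1.2 + b2.2)%N)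
  then lam^-1 ^+ (b1.2 * b2.1) else 0.

Definition tmul (u v : Telt) : Telt := fun c =>
  \sum_(b1 : TB) \sum_(b2 : TB) u b1 * v b2 * tmulB b1 b2 c.

Definition tone : Telt := fun c => (((c.1 : nat) == 0%N) && ((c.2 : nat) == 0%N))%:R.
Definition tg : Telt := fun c => (((c.1 : nat) == (1 %% m)%N) && ((c.2 : nat) == 0%N))%:R.
Definition tx : Telt := fun c => (((c.1 : nat) == 0%N) && ((c.2 : nat) == 1%N))%:R.
Definition tpow (u : Telt) (e : nat) : Telt := iter e (tmul u) tone.

Definition TT := TB -> TB -> k.
Definition tens (u v : Telt) : TT := fun b1 b2 => u b1 * v b2.
Definition tt_mul (U V : TT) : TT := fun c1 c2 =>
  \sum_(b1 : TB) \sum_(b2 : TB) \sum_(d1 : TB) \sum_(d2 : TB)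
     U b1 b2 * V d1 d2 * tmulB b1 d1 c1 * tmulB b2 d2 c2.
Definition tt_one : TT := tens tone tone.
Definition tt_pow (U : TT) (e : nat) : TT := iter e (tt_mul U) tt_one.

Definition tDg : TT := tens tg tg.
Definition tDx : TT := fun c1 c2 => tone c1 * tx c2 + tx c1 * tg c2.
Definition tDeltaB (b : TB) : TT := tt_mul (tt_pow tDg b.1) (tt_pow tDx b.2).
Definition tDelta (u : Telt) : TT := fun c1 c2 => \sum_(b : TB) u b * tDeltaB b c1 c2.

(* counit: eps(g) = 1, eps(x) = 0 *)
Definition teps (u : Telt) : k := \sum_(b : TB) u b * ((b.2 : nat) == 0%N)%:R.

Definition tginv : Telt := tpow tg m.-1.
Definition tSx : Telt := fun c => - tmul tx tginv c.
Definition tSB (b : TB) : Telt := tmul (tpow tSx b.2) (tpow tginv b.1).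
Definition tS (u : Telt) : Telt := fun c => \sum_(b : TB) u b * tSB b c.

Definition hopf_ideal (I : Telt -> Prop) : Prop :=
  I tzero /\
  (forall u v, I u -> I v -> I (tadd u v)) /\
  (forall c u, I u -> I (tscale c u)) /\
  (forall u v, I u -> I (tmul u v) /\ I (tmul v u)) /\
  (forall u, I u -> teps u = 0) /\
  (forall u, I u -> exists (N : nat) (a b c d : nat -> Telt),
      (forall i, (i < N)%N -> I (a i) /\ I (d i)) /\
      tDelta u = (fun c1 c2 => \sum_(i < N) (a i c1 * b i c2 + c i c1 * d i c2))) /\
  (forall u, I u -> I (tS u)).

End Taft.

(* The path algebra k Qbar of the doubled cyclic quiver on n vertices. *)
(* Vertices are 'Z_n (indices mod n, n >= 3 in the theorem).  At each  *)
(* vertex v there are exactly two outgoing arrows: a_v : v -> v+1      *)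
(* (encoded by false) and a_{v-1}^* : v -> v-1 (encoded by true).      *)
(* Hence a path is (start vertex, list of booleans); the trivial path  *)
(* e_v is (v, [::]).  Elements of k Qbar are the finitely supported    *)
(* functions Path -> k; multiplication is concatenation (p then q).    *)
Section Quiver.
Variables (k : fieldType) (n : nat).

Definition Vert := 'Z_n.
Definition Path := (Vert * seq bool)%type.
Definition KQ := Path -> k.

Definition step (v : Vert) (b : bool) : Vert := if b then v - 1 else v + 1.
Definition walk (v : Vert) (l : seq bool) : Vert := foldl step v l.

Definition kq_zero : KQ := fun _ => 0.
Definition kq_add (f g : KQ) : KQ := fun p => f p + g p.
Definition kq_scale (c : k) (f : KQ) : KQ := fun p => c * f p.
Definition kq_one : KQ := fun p => (p.2 == [::])%:R.
Definition kq_mul (f g : KQ) : KQ := fun p =>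
  \sum_(j < (size p.2).+1)
     f (p.1, take j p.2) * g (walk p.1 (take j p.2), drop j p.2).

Definition vert (v : Vert) : KQ := fun p => (p == (v, [::]))%:R.
Definition arrow (v : Vert) (b : bool) : KQ := fun p => (p == (v, [:: b]))%:R.
(* a_i : i -> i+1   and   a_i^* : i+1 -> i *)
Definition arr_a (i : Vert) : KQ := arrow i false.
Definition arr_as (i : Vert) : KQ := arrow (i + 1) true.

Definition finsupp (f : KQ) : Prop :=
  exists s : seq Path, forall p, p \notin s -> f p = 0.

End Quiver.

Arguments tadd {k m r}. Arguments tscale {k m r}. Arguments tbasis {k m r}.
Arguments tmulB {k m r}. Arguments tmul {k m r}. Arguments tpow {k m r}.
Arguments tens {k m r}. Arguments tt_mul {k m r}. Arguments tt_pow {k m r}.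
Arguments tDeltaB {k m r}. Arguments tDelta {k m r}. Arguments teps {k m r}.
Arguments tS {k m r}. Arguments hopf_ideal {k m r}.
Arguments step {n}. Arguments walk {n}.
Arguments kq_add {k n}. Arguments kq_scale {k n}. Arguments kq_mul {k n}.
Arguments vert {k n}. Arguments arrow {k n}. Arguments arr_a {k n}.
Arguments arr_as {k n}. Arguments finsupp {k n}.

Section Action.
Variables (k : fieldType) (m r : nat) (lam : k) (n : nat).
Variable act : Telt k m r -> KQ k n -> KQ k n.

Definition taft_module_algebra : Prop :=
  (forall u f, finsupp f -> finsupp (act u f)) /\
  (forall u f, finsupp f ->
     act u f = (fun p => \sum_(b : TB m r) u b * act (tbasis b) f p)) /\
  (forall u f g, finsupp f -> finsupp g ->
     act u (kq_add f g) = kq_add (act u f) (act u g)) /\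
  (forall u c f, finsupp f -> act u (kq_scale c f) = kq_scale c (act u f)) /\
  (forall f, finsupp f -> act (tone k m r) f = f) /\
  (forall u v f, finsupp f -> act (tmul lam u v) f = act u (act v f)) /\
  (forall u f g, finsupp f -> finsupp g ->
     act u (kq_mul f g) =
     (fun p => \sum_(b1 : TB m r) \sum_(b2 : TB m r)
        tDelta lam u b1 b2 * kq_mul (act (tbasis b1) f) (act (tbasis b2) g) p)) /\
  (forall u, act u (kq_one k n) = kq_scale (teps u) (kq_one k n)).

Definition inner_faithful : Prop :=
  forall I : Telt k m r -> Prop, hopf_ideal lam I ->
    (forall u f, I u -> finsupp f -> act u f = kq_zero k n) ->
    forall u, I u -> u = tzero k m r.

Definition linear_action : Prop :=
  (forall i, exists j, act (tg k m r) (vert i) = vert j) /\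
  (forall (L : nat) f, finsupp f -> (forall p, size p.2 != L -> f p = 0) ->
     forall p, size p.2 != L -> act (tg k m r) f p = 0) /\
  (forall i p, p.2 != [::] -> act (tx k m r) (vert i) p = 0) /\
  (forall v b p, (1 < size p.2)%N -> act (tx k m r) (arrow v b) p = 0).

(* gamma_i : coefficient of e_i in x.e_i  (= gamma_i e_i - gamma_i lam^-1 e_{g.i}
   with g.i <> i) *)
Definition gamma (i : Vert n) : k := act (tx k m r) (vert i) (i, [::]).

(* quiver-Taft map on an arrow a with source v:
   sigma(a) = x.a - gamma_{t(a)} a + gamma_{s(a)} lam^-1 (g.a) *)
Definition sigma_arr (v : Vert n) (b : bool) : KQ k n := fun p =>
  act (tx k m r) (arrow v b) p - gamma (step v b) * arrow v b p
  + gamma v * lam^-1 * act (tg k m r) (arrow v b) p.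

(* sigma on the span of vertices and arrows (sigma(e_i) = 0) *)
Definition sigma (f : KQ k n) : KQ k n := fun p =>
  \sum_(v : Vert n) \sum_(b : bool) f (v, [:: b]) * sigma_arr v b p.

End Action.

Arguments taft_module_algebra {k m r} lam {n} act.
Arguments inner_faithful {k m r} lam {n} act.
Arguments linear_action {k m r n} act.
Arguments gamma {k m r n} act i.
Arguments sigma_arr {k m r} lam {n} act v b.
Arguments sigma {k m r} lam {n} act f.

(* For an arrow a : s -> t, the twisted Leibniz rule x.(pq) = p (x.q) + (x.p) (g.q),
   applied to a = a e_t and to a = e_s a, together with x.e_i = γ_i e_i - λ^-1 γ_i e_(i+d),
   shows that σ(a) is a combination of the arrows s -> t + d, plus a multiple of e_s when
   s = t + d.  Hence σ^2(a) has an arrow component only if t, t + d and t + 2d are all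
   neighbours s ± 1 of s, which forces n = 4 and d = 2; as σ only reads arrow components,
   σ^3(a) = 0.  For r = 2 the vertex component of σ^2(a) survives only if s = t + 2d,
   i.e. n = 3; then γ_i = λ^-3 γ_i forces γ = 0, so σ(a) = x.a is a multiple of one arrow
   and σ^2(a) = x^2.a = 0. *)

From HB Require Import structures.
From mathcomp Require Import all_boot all_order all_algebra.
From mathcomp Require Import ring zify.
From Stdlib Require Import FunctionalExtensionality.
Import GRing.Theory.
Local Open Scope ring_scope.
Set Implicit Arguments.
Unset Strict Implicit.

Section TaftAlgebra.
Variables (k : fieldType) (m r : nat) (lam : k).
Hypotheses (m_gt1 : (1 < m)%N) (r_gt1 : (1 < r)%N).

Definition pbw1 : TB m r := (Ordinal (ltnW m_gt1), Ordinal (ltnW r_gt1)).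
Definition pbw_x : TB m r := (Ordinal (ltnW m_gt1), Ordinal r_gt1).
Definition pbw_g : TB m r := (Ordinal m_gt1, Ordinal (ltnW r_gt1)).

Lemma eqTB (b c : TB m r) : (b == c) = ((b.1 : nat) == c.1) && ((b.2 : nat) == c.2).
Proof. by case: b c => [b1 b2] [c1 c2]. Qed.

Lemma tone_E c : tone k m r c = (c == pbw1)%:R.
Proof. by rewrite eqTB. Qed.
Lemma tx_E c : tx k m r c = (c == pbw_x)%:R.
Proof. by rewrite eqTB. Qed.
Lemma tg_E c : tg k m r c = (c == pbw_g)%:R.
Proof. by rewrite /tg eqTB /= modn_small. Qed.

Lemma tbasis_pbw1 : tbasis pbw1 = tone k m r.
Proof. by apply: functional_extensionality => c; rewrite tone_E. Qed.
Lemma tbasis_pbw_x : tbasis pbw_x = tx k m r.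
Proof. by apply: functional_extensionality => c; rewrite tx_E. Qed.
Lemma tbasis_pbw_g : tbasis pbw_g = tg k m r.
Proof. by apply: functional_extensionality => c; rewrite tg_E. Qed.

Lemma tmulB1l b c : tmulB lam pbw1 b c = (c == b)%:R.
Proof. by rewrite /tmulB eqTB /= add0n mul0n modn_small //; case: ifP. Qed.
Lemma tmulB1r b c : tmulB lam b pbw1 c = (c == b)%:R.
Proof. by rewrite /tmulB eqTB /= !addn0 muln0 modn_small //; case: ifP. Qed.

Lemma sum_indicator (T : finType) (a : T) (F : T -> k) :
  \sum_b (b == a)%:R * F b = F a.
Proof.
by rewrite (bigD1 a) //= eqxx mul1r big1 ?addr0 // => b /negPf->; rewrite mul0r.
Qed.

Lemma tt_mul1l V c1 c2 : tt_mul lam (tt_one k m r) V c1 c2 = V c1 c2.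
Proof.
rewrite /tt_mul /tt_one /tens.
rewrite (big_only1 pbw1) // => [|b1 /negPf b1N _]; last first.
  by do 3!(rewrite big1 // => ? _); rewrite tone_E b1N !mul0r.
rewrite (big_only1 pbw1) // => [|b2 /negPf b2N _]; last first.
  by do 2!(rewrite big1 // => ? _); rewrite (tone_E b2) b2N !(mulr0, mul0r).
rewrite (big_only1 c1) // => [|d1 /negPf d1N _]; last first.
  by rewrite big1 // => ? _; rewrite tmulB1l eq_sym d1N !(mulr0, mul0r).
rewrite (big_only1 c2) // => [|d2 /negPf d2N _]; last first.
  by rewrite (tmulB1l d2) eq_sym d2N !(mulr0, mul0r).
by rewrite !tmulB1l !tone_E !eqxx !(mulr1, mul1r).
Qed.

Lemma tt_mul1r V c1 c2 : tt_mul lam V (tt_one k m r) c1 c2 = V c1 c2.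
Proof.
have inner b1 b2 : \sum_(d1 : TB m r) \sum_(d2 : TB m r)
    V b1 b2 * tt_one k m r d1 d2 * tmulB lam b1 d1 c1 * tmulB lam b2 d2 c2
    = V b1 b2 * (c1 == b1)%:R * (c2 == b2)%:R.
  rewrite (big_only1 pbw1) // => [|d1 /negPf d1N _]; last first.
    by rewrite big1 // => ? _; rewrite /tt_one /tens tone_E d1N !(mulr0, mul0r).
  rewrite (big_only1 pbw1) // => [|d2 /negPf d2N _]; last first.
    by rewrite /tt_one /tens (tone_E d2) d2N !(mulr0, mul0r).
  by rewrite !tmulB1r /tt_one /tens !tone_E !eqxx !mulr1.
rewrite /tt_mul; under eq_bigr => b1 _ do under eq_bigr => b2 _ do rewrite inner.
rewrite (big_only1 c1) // => [|b1 /negPf b1N _]; last first.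
  by rewrite big1 // => ? _; rewrite eq_sym b1N !(mulr0, mul0r).
rewrite (big_only1 c2) // => [|b2 /negPf b2N _]; last first.
  by rewrite (eq_sym c2) b2N !(mulr0, mul0r).
by rewrite !eqxx !mulr1.
Qed.

Lemma tDelta_tx c1 c2 :
  tDelta lam (tx k m r) c1 c2 = tone k m r c1 * tx k m r c2 + tx k m r c1 * tg k m r c2.
Proof.
rewrite /tDelta (big_only1 pbw_x) // => [|b /negPf bN _]; last by rewrite tx_E bN mul0r.
by rewrite tx_E eqxx mul1r /tDeltaB /= tt_mul1l tt_mul1r.
Qed.

Lemma sum_tDelta_tx (F : TB m r -> TB m r -> k) :
  \sum_b1 \sum_b2 tDelta lam (tx k m r) b1 b2 * F b1 b2 = F pbw1 pbw_x + F pbw_x pbw_g.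
Proof.
under eq_bigr => b1 _ do under eq_bigr => b2 _ do
  rewrite tDelta_tx tone_E tx_E (tx_E b1) tg_E mulrDl -!mulrA.
under eq_bigr => b1 _ do rewrite big_split -!mulr_sumr /=.
by rewrite big_split /= !sum_indicator.
Qed.

Lemma tmul_indicator (a b c : TB m r) :
  tmul lam (fun x => (x == a)%:R) (fun x => (x == b)%:R) c = tmulB lam a b c.
Proof.
rewrite /tmul; under eq_bigr => b1 _ do under eq_bigr => b2 _ do rewrite -!mulrA.
by under eq_bigr => b1 _ do rewrite -mulr_sumr sum_indicator; rewrite sum_indicator.
Qed.

Lemma tmul_tx_tg :
  tmul lam (tx k m r) (tg k m r) = tscale lam^-1 (tmul lam (tg k m r) (tx k m r)).
Proof.
apply: functional_extensionality => c.
rewrite -tbasis_pbw_x -tbasis_pbw_g /tscale !tmul_indicator /tmulB /=.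
rewrite !addn0 !add0n muln0 muln1 expr0 expr1.
by case: ifP; rewrite ?mulr1 ?mulr0.
Qed.

Lemma tmul_tx_tx : (r <= 2)%N -> tmul lam (tx k m r) (tx k m r) = tzero k m r.
Proof.
move=> r_le2; apply: functional_extensionality => c.
rewrite -tbasis_pbw_x tmul_indicator /tmulB /=.
suff /negPf-> : (c.2 : nat) != 2%N by rewrite andbF.
by have := ltn_ord c.2; lia.
Qed.
End TaftAlgebra.

Section Neighbours.
Variable n : nat.
Implicit Types (v x : Vert n) (b : bool).

Lemma addr_solve (R : zmodType) (a b x : R) : a = b + x -> x = a - b.
Proof. by move->; rewrite addrC addKr. Qed.

Lemma step_shift_twice v x b b' b'' :
  step v b' = step v b + x -> step v b'' = step v b' + x ->
  x = 0 \/ (x = 2%:R /\ 4%:R = 0 :> Vert n).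
Proof.
move=> E1 E2; have [eb|nb] := eqVneq b' b.
  by left; move/addr_solve: E1; rewrite eb subrr.
have [eb'|nb'] := eqVneq b'' b'.
  by left; move/addr_solve: E2; rewrite eb' subrr.
right; case: b b' b'' nb nb' E1 E2 => [] [] [] //= _ _ /addr_solve x1 /addr_solve x2.
- split; first by rewrite x1; ring.
  have -> : 4%:R = (v + 1 - (v - 1)) - (v - 1 - (v + 1)) :> Vert n by ring.
  by rewrite -x1 -x2 subrr.
- split; first by rewrite x2; ring.
  have -> : 4%:R = (v + 1 - (v - 1)) - (v - 1 - (v + 1)) :> Vert n by ring.
  by rewrite -x1 -x2 subrr.
Qed.

Lemma step_shift_back v x b b' :
  step v b' = step v b + x -> v = step v b' + x -> x = 0 \/ 3%:R = 0 :> Vert n.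
Proof.
move=> E1 E2; have [eb|nb] := eqVneq b' b.
  by left; move/addr_solve: E1; rewrite eb subrr.
right; case: b b' nb E1 E2 => [] [] //= _ /addr_solve x1 /addr_solve x2.
- have -> : 3%:R = (v + 1 - (v - 1)) - (v - (v + 1)) :> Vert n by ring.
  by rewrite -x1 -x2 subrr.
- have -> : 3%:R = (v - (v - 1)) - (v - 1 - (v + 1)) :> Vert n by ring.
  by rewrite -x1 -x2 subrr.
Qed.

Hypothesis n_gt2 : (2 < n)%N.

Lemma Zn_natr_eq N M : ((N%:R : Vert n) == M%:R) = (N == M %[mod n]).
Proof. by rewrite -val_eqE /= !val_Zp_nat //; apply: ltnW. Qed.

Lemma Zn_natr_eq0 N : ((N%:R : Vert n) == 0) = (n %| N)%N.
Proof. by rewrite -(mulr0n (1 : Vert n)) Zn_natr_eq mod0n. Qed.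

Lemma step_inj v : injective (step v).
Proof.
have two_neq0 : 2%:R != 0 :> Vert n by rewrite Zn_natr_eq0 gtnNdvd.
move=> [] [] //= E; case/eqP: two_neq0;
  have -> : 2%:R = (v + 1) - (v - 1) :> Vert n by ring.
- by rewrite -E subrr.
- by rewrite E subrr.
Qed.

Lemma no_step_shift_twice v b b' b'' (d : nat) :
  (0 < d)%N -> (d < n)%N -> (n != 4%N \/ d != 2%N) ->
  step v b' = step v b + d%:R -> step v b'' = step v b' + d%:R -> False.
Proof.
move=> d_gt0 d_ltn nd E1 E2.
case: (step_shift_twice E1 E2) => [/eqP|[/eqP d2 /eqP four]].
  by rewrite Zn_natr_eq0 gtnNdvd.
move: four d2; rewrite Zn_natr_eq0 Zn_natr_eq => n_dvd4.
have n4 : n = 4%N.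
  have : n != 3%N by apply: contraTneq n_dvd4 => ->.
  by have := dvdn_leq (isT : (0 < 4)%N) n_dvd4; lia.
move: d_ltn; rewrite n4 => d_lt4; rewrite !modn_small // => /eqP d2.
by case: nd => /eqP.
Qed.
End Neighbours.

Section PathAlgebra.
Variables (k : fieldType) (n : nat).
Implicit Types (f g : KQ k n) (u w : Vert n).

Lemma vert_trivial u w : vert (k:=k) u (w, [::]) = (w == u)%:R.
Proof. by rewrite /vert xpair_eqE eqxx andbT. Qed.

Lemma vert_nontrivial u p : p.2 != [::] -> vert (k:=k) u p = 0.
Proof. by case: p => w l l_nil; rewrite /vert xpair_eqE (negPf l_nil) andbF. Qed.

Lemma arrow_trivial u b w : arrow (k:=k) u b (w, [::]) = 0.
Proof. by rewrite /arrow xpair_eqE andbF. Qed.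

Lemma arrow_length1 u b w c : arrow (k:=k) u b (w, [:: c]) = ((w == u) && (c == b))%:R.
Proof. by rewrite /arrow xpair_eqE eqseq_cons andbT. Qed.

Lemma arrow_long u b p : (1 < size p.2)%N -> arrow (k:=k) u b p = 0.
Proof. by rewrite /arrow; case: eqP => // ->. Qed.

Lemma kq_mul_vertl u f p : kq_mul (vert u) f p = (p.1 == u)%:R * f p.
Proof.
case: p => w l; rewrite /kq_mul big_ord_recl /= take0 drop0 vert_trivial big1 ?addr0 //.
move=> i _; rewrite vert_nontrivial ?mul0r //= -size_eq0 size_take /bump leq0n.
by case: ifP => // _; rewrite -lt0n (leq_ltn_trans (leq0n i)).
Qed.

Lemma kq_mul_vertr u f p : kq_mul f (vert u) p = f p * (walk p.1 p.2 == u)%:R.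
Proof.
case: p => w l; rewrite /kq_mul big_ord_recr /= take_size drop_size vert_trivial.
rewrite big1 ?add0r // => i _; rewrite vert_nontrivial ?mulr0 //=.
by rewrite -size_eq0 size_drop subn_eq0 -ltnNge.
Qed.

Lemma kq_mul_trivial f g w : kq_mul f g (w, [::]) = f (w, [::]) * g (w, [::]).
Proof. by rewrite /kq_mul big_ord_recl big_ord0 addr0. Qed.

Lemma kq_mul_length1 f g w b : kq_mul f g (w, [:: b]) =
  f (w, [::]) * g (w, [:: b]) + f (w, [:: b]) * g (step w b, [::]).
Proof. by rewrite /kq_mul big_ord_recl big_ord_recl big_ord0 addr0. Qed.

Lemma vert_mul_vert u : kq_mul (vert u) (vert u) = vert (k:=k) u.
Proof.
apply: functional_extensionality => -[w l]; rewrite kq_mul_vertl /=.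
by have [->|/negPf wu] := eqVneq w u; rewrite ?mul1r // /vert xpair_eqE wu mul0r.
Qed.

Lemma vert_mul_vert_neq u w : u != w -> kq_mul (vert u) (vert w) = kq_zero k n.
Proof.
move=> /negPf uw; apply: functional_extensionality => -[v l]; rewrite kq_mul_vertl /=.
by have [->|_] := eqVneq v u; rewrite ?mul0r // /vert xpair_eqE uw mulr0.
Qed.

Lemma arrow_mul_vert u b : kq_mul (arrow u b) (vert (step u b)) = arrow (k:=k) u b.
Proof.
apply: functional_extensionality => p; rewrite kq_mul_vertr /arrow.
by have [->|_] := eqVneq p (u, [:: b]); rewrite ?eqxx ?mulr1 ?mul0r.
Qed.

Lemma vert_mul_arrow u b : kq_mul (vert u) (arrow u b) = arrow (k:=k) u b.
Proof.
apply: functional_extensionality => p; rewrite kq_mul_vertl /arrow.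
by have [->|_] := eqVneq p (u, [:: b]); rewrite ?eqxx ?mul1r ?mulr0.
Qed.

Lemma finsupp_vert u : finsupp (vert (k:=k) u).
Proof. by exists [:: (u, [::])] => p; rewrite inE /vert => /negPf->. Qed.

Lemma finsupp_arrow u b : finsupp (arrow (k:=k) u b).
Proof. by exists [:: (u, [:: b])] => p; rewrite inE /arrow => /negPf->. Qed.

Lemma finsupp_zero : finsupp (kq_zero k n).
Proof. by exists [::]. Qed.

Lemma finsupp_scale c f : finsupp f -> finsupp (kq_scale c f).
Proof. by case=> s fs; exists s => p /fs; rewrite /kq_scale => ->; rewrite mulr0. Qed.

Lemma kq_eq_scale_arrow f u b :
  (forall p, f p != 0 -> p = (u, [:: b])) -> f = kq_scale (f (u, [:: b])) (arrow u b).
Proof.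
move=> f_supp; apply: functional_extensionality => p; rewrite /kq_scale /arrow.
have [->|p_neq] := eqVneq p (u, [:: b]); first by rewrite mulr1.
by rewrite mulr0; apply/eqP; apply: contraNT p_neq => /f_supp ->.
Qed.

End PathAlgebra.

Section ModuleAlgebra.
Variables (k : fieldType) (m r : nat) (lam : k) (n : nat).
Variable act : Telt k m r -> KQ k n -> KQ k n.
Hypotheses (m_gt1 : (1 < m)%N) (r_gt1 : (1 < r)%N).
Hypothesis act_alg : taft_module_algebra lam act.
Implicit Types (f g : KQ k n).

Local Notation X := (act (tx k m r)).
Local Notation G := (act (tg k m r)).

Lemma act_add u f g :
  finsupp f -> finsupp g -> act u (kq_add f g) = kq_add (act u f) (act u g).
Proof. by case: act_alg => _ [_ [H _]]; apply: H. Qed.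

Lemma act_scale u c f : finsupp f -> act u (kq_scale c f) = kq_scale c (act u f).
Proof. by case: act_alg => _ [_ [_ [H _]]]; apply: H. Qed.

Lemma act_one f : finsupp f -> act (tone k m r) f = f.
Proof. by case: act_alg => _ [_ [_ [_ [H _]]]]; apply: H. Qed.

Lemma act_mul u v f : finsupp f -> act (tmul lam u v) f = act u (act v f).
Proof. by case: act_alg => _ [_ [_ [_ [_ [H _]]]]]; apply: H. Qed.

Lemma act_tscale c u f : finsupp f -> act (tscale c u) f = kq_scale c (act u f).
Proof.
case: act_alg => _ [lin _] f_fin; rewrite (lin _ _ f_fin) (lin u f f_fin).
apply: functional_extensionality => p; rewrite /kq_scale mulr_sumr.
by apply: eq_bigr => b _; rewrite mulrA.
Qed.

Lemma act_tzero f : finsupp f -> act (tzero k m r) f = kq_zero k n.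
Proof.
case: act_alg => _ [lin _] f_fin; rewrite (lin _ _ f_fin).
by apply: functional_extensionality => p; rewrite big1 // => b _; rewrite mul0r.
Qed.

Lemma act_kq_zero u : act u (kq_zero k n) = kq_zero k n.
Proof.
have zeroE : kq_zero k n = kq_scale 0 (kq_zero k n).
  by apply: functional_extensionality => p; rewrite /kq_scale mul0r.
rewrite {1}zeroE act_scale; last exact: finsupp_zero.
by apply: functional_extensionality => p; rewrite /kq_scale mul0r.
Qed.

Lemma x_leibniz f g : finsupp f -> finsupp g ->
  X (kq_mul f g) = fun p => kq_mul f (X g) p + kq_mul (X f) (G g) p.
Proof.
case: act_alg => _ [_ [_ [_ [_ [_ [mul_rule _]]]]]] f_fin g_fin.
rewrite mul_rule //; apply: functional_extensionality => p.
by rewrite sum_tDelta_tx // tbasis_pbw1 tbasis_pbw_x tbasis_pbw_g act_one.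
Qed.

Lemma x_g_commute f : finsupp f -> X (G f) = kq_scale lam^-1 (G (X f)).
Proof. by move=> f_fin; rewrite -!act_mul // tmul_tx_tg // act_tscale. Qed.

Lemma x_square f : (r <= 2)%N -> finsupp f -> X (X f) = kq_zero k n.
Proof. by move=> r_le2 f_fin; rewrite -act_mul // tmul_tx_tx // act_tzero. Qed.

Local Notation sa := (sigma_arr lam act).
Local Notation sig := (sigma lam act).

Lemma sigma_arrow v b : sig (arrow v b) = sa v b.
Proof.
apply: functional_extensionality => p; rewrite /sigma (big_only1 v) // => [|w /negPf wv _].
  rewrite (big_only1 b) // => [|c /negPf cb _]; first by rewrite arrow_length1 !eqxx mul1r.
  by rewrite arrow_length1 cb andbF mul0r.
by rewrite big1 // => c _; rewrite arrow_length1 wv mul0r.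
Qed.

Lemma sigma_scale c f : sig (kq_scale c f) = kq_scale c (sig f).
Proof.
apply: functional_extensionality => p; rewrite /sigma /kq_scale mulr_sumr.
by apply: eq_bigr => v _; rewrite mulr_sumr; apply: eq_bigr => b _; rewrite mulrA.
Qed.

Lemma sigma_eq0 f : (forall w c, f (w, [:: c]) = 0) -> sig f = kq_zero k n.
Proof.
move=> f0; apply: functional_extensionality => p; rewrite /sigma big1 // => v _.
by rewrite big1 // => b _; rewrite f0 mul0r.
Qed.

Lemma iter_sigma_zero j : iter j sig (kq_zero k n) = kq_zero k n.
Proof. by elim: j => //= j ->; apply: sigma_eq0. Qed.

Lemma sigma_neq0 f p : sig f p != 0 ->
  exists v b, f (v, [:: b]) != 0 /\ sa v b p != 0.
Proof.
move=> nz; have /existsP[v /existsP[b]] :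
    [exists v, exists b, (f (v, [:: b]) != 0) && (sa v b p != 0)].
  apply: contraNT nz => /existsPn none; rewrite /sigma big1 // => v _.
  rewrite big1 // => b _; have /existsPn/(_ b) := none v.
  by rewrite negb_and !negbK => /orP[] /eqP->; rewrite ?mul0r ?mulr0.
by case/andP; exists v, b.
Qed.

Section Rotation.
Variable d : nat.
Hypothesis act_lin : linear_action act.
Hypotheses (n_gt2 : (2 < n)%N) (d_gt0 : (0 < d)%N) (d_ltn : (d < n)%N).
Hypothesis g_vert : forall i, G (vert i) = vert (i + d%:R).
Hypothesis g_arrow :
  forall v b, exists c, G (arrow v b) = kq_scale c (arrow (v + d%:R) b).

Local Notation gamma := (gamma act).

Lemma d_neq0 : d%:R != 0 :> Vert n.
Proof. by rewrite Zn_natr_eq0 // gtnNdvd. Qed.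

Lemma shift_neq (i : Vert n) : i != i + d%:R.
Proof. by rewrite eq_sym -subr_eq0 addrC addKr d_neq0. Qed.

Lemma x_vert_nontrivial i p : p.2 != [::] -> X (vert i) p = 0.
Proof. by case: act_lin => _ [_ [H _]]; apply: H. Qed.

Lemma x_arrow_long v b p : (1 < size p.2)%N -> X (arrow v b) p = 0.
Proof. by case: act_lin => _ [_ [_ H]]; apply: H. Qed.

Lemma x_vert_off i j : j != i -> j != i + d%:R -> X (vert i) (j, [::]) = 0.
Proof.
move=> /negPf ji /negPf jid.
have := congr1 (fun F => F (j, [::])) (x_leibniz (finsupp_vert k i) (finsupp_vert k i)).
by rewrite vert_mul_vert /= kq_mul_vertl g_vert kq_mul_vertr /= ji jid mul0r mulr0 add0r.
Qed.

Lemma x_vert_shift i : X (vert i) (i + d%:R, [::]) = - gamma (i + d%:R).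
Proof.
have := congr1 (fun F => F (i + d%:R, [::]))
  (x_leibniz (finsupp_vert k (i + d%:R)) (finsupp_vert k i)).
rewrite vert_mul_vert_neq 1?eq_sym ?shift_neq // act_kq_zero /=.
rewrite kq_mul_vertl g_vert kq_mul_vertr /=.
by rewrite !eqxx mul1r mulr1 => /eqP; rewrite eq_sym addr_eq0 => /eqP.
Qed.

Lemma x_vert_decomp i : X (vert i) =
  kq_add (kq_scale (gamma i) (vert i)) (kq_scale (- gamma (i + d%:R)) (vert (i + d%:R))).
Proof.
apply: functional_extensionality => -[j l]; rewrite /kq_add /kq_scale.
have [->|l_nil] := eqVneq l [::]; last first.
  by rewrite x_vert_nontrivial // !vert_nontrivial // !mulr0 addr0.
rewrite !vert_trivial; have [->|ji] := eqVneq j i.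
  by rewrite (negPf (shift_neq i)) mulr1 mulr0 addr0.
have [->|jid] := eqVneq j (i + d%:R); first by rewrite x_vert_shift mulr0 mulr1 add0r.
by rewrite x_vert_off // !mulr0 addr0.
Qed.

Lemma gamma_shift i : gamma (i + d%:R) = lam^-1 * gamma i.
Proof.
have := congr1 (fun F => F (i + d%:R, [::])) (x_g_commute (finsupp_vert k i)).
rewrite g_vert (x_vert_decomp i) act_add; try exact/finsupp_scale/finsupp_vert.
rewrite /kq_scale /kq_add !act_scale; try exact: finsupp_vert.
rewrite !g_vert /kq_scale !vert_trivial eqxx (negPf (shift_neq _)).
by rewrite mulr1 mulr0 addr0.
Qed.

Lemma gamma_shift_iter N i : gamma (i + (N * d)%:R) = lam^-1 ^+ N * gamma i.
Proof.
elim: N => [|N IH]; first by rewrite mul0n addr0 expr0 mul1r.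
by rewrite mulSn natrD addrCA addrC gamma_shift IH exprS mulrA.
Qed.

Lemma gamma_eq0 N : r.-primitive_root lam -> (N * d)%:R = 0 :> Vert n -> ~~ (r %| N)%N ->
  forall i, gamma i = 0.
Proof.
move=> lam_prim Nd0 r_ndvd i.
have := gamma_shift_iter N i; rewrite Nd0 addr0 => /eqP.
rewrite -subr_eq0 -{1}[gamma i]mul1r -mulrBl mulf_eq0 => /orP[|/eqP //].
by rewrite subr_eq0 eq_sym exprVn invr_eq1 -(prim_order_dvd lam_prim) (negPf r_ndvd).
Qed.

Lemma x_arrow_via_target v b p : X (arrow v b) p =
  kq_mul (arrow v b) (X (vert (step v b))) p
  + kq_mul (X (arrow v b)) (vert (step v b + d%:R)) p.
Proof.
have := congr1 (fun F => F p) (x_leibniz (finsupp_arrow k v b) (finsupp_vert k (step v b))).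
by rewrite arrow_mul_vert g_vert.
Qed.

Lemma x_arrow_via_source v b p : X (arrow v b) p =
  kq_mul (vert v) (X (arrow v b)) p + kq_mul (X (vert v)) (G (arrow v b)) p.
Proof.
have := congr1 (fun F => F p) (x_leibniz (finsupp_vert k v) (finsupp_arrow k v b)).
by rewrite vert_mul_arrow.
Qed.

Lemma sigma_arr_trivial v b w :
  sa v b (w, [::]) != 0 -> w = v /\ v = step v b + d%:R.
Proof.
have [c gc] := g_arrow v b.
rewrite /sigma_arr gc /kq_scale !arrow_trivial !mulr0 subr0 addr0 => nz.
have := x_arrow_via_target v b (w, [::]).
rewrite !kq_mul_trivial arrow_trivial mul0r add0r vert_trivial => Et.
have := x_arrow_via_source v b (w, [::]).
rewrite !kq_mul_trivial vert_trivial gc /kq_scale arrow_trivial !mulr0 addr0 => Es.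
have wv : w = v.
  by apply/eqP; apply: contraNT nz => /negPf wv; rewrite Es wv mul0r.
split=> //; rewrite -wv; apply/eqP; apply: contraNT nz => /negPf wt.
by rewrite Et -wv wt mulr0.
Qed.

Lemma sigma_arr_length1 v b w c :
  sa v b (w, [:: c]) != 0 -> w = v /\ step v c = step v b + d%:R.
Proof.
have [c0 gc] := g_arrow v b.
have Et := x_arrow_via_target v b (w, [:: c]).
rewrite !kq_mul_length1 arrow_trivial mul0r add0r vert_nontrivial // mulr0 add0r in Et.
rewrite arrow_length1 vert_trivial in Et.
have Es := x_arrow_via_source v b (w, [:: c]).
rewrite !kq_mul_length1 !vert_trivial vert_nontrivial // mul0r addr0 in Es.
rewrite (@x_vert_nontrivial _ (w, [:: c])) // mul0r addr0 gc /kq_scale arrow_length1 in Es.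
rewrite /sigma_arr gc /kq_scale !arrow_length1.
have [wv|/negPf wv] := eqVneq w v; last first.
  rewrite Es wv mul0r add0r andFb mulr0 subr0.
  case: andP => [[/eqP-> /eqP->]|_]; last by rewrite !mulr0 addr0 eqxx.
  rewrite x_vert_shift gamma_shift => /eqP nz; exfalso; apply: nz; ring.
subst w; have [cb|/negPf cb] := eqVneq c b.
  subst c; rewrite Et !eqxx (negPf (shift_neq _)) mulr0 addr0 mul1r.
  by rewrite -/(gamma _) andbT (negPf (shift_neq _)) !mulr0 mulr1 addr0 subrr eqxx.
rewrite !andbF /= !mulr0 subr0 addr0 => nz; split=> //.
by apply/eqP; apply: contraNT nz => /negPf st; rewrite Et st cb andbF /= mul0r mulr0 addr0.
Qed.

Lemma sigma_arr_long v b p : (1 < size p.2)%N -> sa v b p = 0.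
Proof.
have [c gc] := g_arrow v b.
move=> long; rewrite /sigma_arr gc /kq_scale !arrow_long // x_arrow_long //.
by rewrite !mulr0 subr0 addr0.
Qed.

Lemma sigma_arr_support v b p : sa v b p != 0 ->
  (p = (v, [::]) /\ v = step v b + d%:R) \/
  (exists2 c, p = (v, [:: c]) & step v c = step v b + d%:R).
Proof.
case: p => w [|c [|c' l]] nz.
- by have [-> E] := sigma_arr_trivial nz; left.
- by have [-> st] := sigma_arr_length1 nz; right; exists c.
- by rewrite sigma_arr_long ?eqxx in nz.
Qed.

Lemma sigma_sigma_arr v b p : sig (sa v b) p != 0 ->
  exists2 c, step v c = step v b + d%:R & sa v c p != 0.
Proof.
case/sigma_neq0 => w [c [/sigma_arr_support[[] //|[c' [<- <-] st]] nz]].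
by exists c.
Qed.

Lemma sigma_arr_gamma0 v b : (forall i, gamma i = 0) -> sa v b = X (arrow v b).
Proof.
move=> gamma0; apply: functional_extensionality => p.
by rewrite /sigma_arr !gamma0 !mul0r subr0 addr0.
Qed.

Lemma sigma2_arr_back v b c : r = 2%N -> r.-primitive_root lam ->
  step v c = step v b + d%:R -> v = step v c + d%:R -> sig (sa v b) = kq_zero k n.
Proof.
move=> r2 lam_prim st back.
have three0 : 3%:R = 0 :> Vert n.
  by case: (step_shift_back st back) => // /eqP; rewrite (negPf d_neq0).
have gamma0 : forall i, gamma i = 0.
  by apply: (gamma_eq0 (N := 3) lam_prim); rewrite ?natrM ?three0 ?mul0r ?r2.
have Xa : X (arrow v b) = kq_scale (X (arrow v b) (v, [:: c])) (arrow v c).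
  apply: kq_eq_scale_arrow => q; rewrite -(sigma_arr_gamma0 _ _ gamma0).
  case/sigma_arr_support => [[_ vt]|[c' -> st']].
    by move: back; rewrite st -vt => /eqP; rewrite (negPf (shift_neq v)).
  by rewrite (step_inj n_gt2 (etrans st' (esym st))).
rewrite sigma_arr_gamma0 // Xa sigma_scale sigma_arrow sigma_arr_gamma0 //.
rewrite -act_scale; last exact: finsupp_arrow.
by rewrite -Xa x_square ?r2 //; apply: finsupp_arrow.
Qed.

Section NoDoubleShift.
Hypothesis n_d_ne42 : n != 4%N \/ d != 2%N.

Lemma sigma2_arr_length1 v b w c : sig (sa v b) (w, [:: c]) = 0.
Proof.
apply/eqP/contraT => /sigma_sigma_arr[c' st1].
case/sigma_arr_support => [[] //|[c'' [_ _] st2]].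
by case: (no_step_shift_twice n_gt2 d_gt0 d_ltn n_d_ne42 st1 st2).
Qed.

Lemma iter_sigma_arrow j v b : (2 < j)%N -> iter j sig (arrow v b) = kq_zero k n.
Proof.
move=> j_gt2; rewrite -(subnK j_gt2) iterD /= sigma_arrow sigma_eq0 ?iter_sigma_zero //.
exact: sigma2_arr_length1.
Qed.

Lemma sigma2_arrow v b : r = 2%N -> r.-primitive_root lam ->
  sig (sig (arrow v b)) = kq_zero k n.
Proof.
move=> r2 lam_prim; rewrite sigma_arrow; apply: functional_extensionality => p.
apply/eqP/contraT => nz.
have [c st /sigma_arr_support[[_ back]|[c' Ep _]]] := sigma_sigma_arr nz.
  by rewrite (sigma2_arr_back r2 lam_prim st back) eqxx in nz.
by rewrite Ep sigma2_arr_length1 eqxx in nz.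
Qed.

Lemma iter_sigma_r_arrow v b :
  r.-primitive_root lam -> iter r sig (arrow v b) = kq_zero k n.
Proof.
move=> lam_prim; have [r_gt2|r_le2] := ltnP 2 r; first exact: iter_sigma_arrow.
have r2 : r = 2%N by apply/eqP; rewrite eqn_leq r_le2 r_gt1.
have iter2 j : j = 2%N -> iter j sig (arrow v b) = sig (sig (arrow v b)) by move->.
by rewrite iter2 // sigma2_arrow.
Qed.

End NoDoubleShift.
End Rotation.
End ModuleAlgebra.

Unset Implicit Arguments.
Set Strict Implicit.

Theorem lemma3p4 (k : fieldType) (r m : nat) (lam : k) (n : nat)
    (act : Telt k m r -> KQ k n -> KQ k n)
    (d : nat) (mu mus : Vert n -> k) :
  (1 < r)%N -> (0 < m)%N -> (r %| m)%N -> r.-primitive_root lam ->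
  (r%:R : k) != 0 ->
  (3 <= n)%N ->
  taft_module_algebra lam act ->
  linear_action act ->
  inner_faithful lam act ->
  (0 < d)%N -> (d <= n - 1)%N ->
  (forall i : Vert n, mu i != 0) -> (forall i : Vert n, mus i != 0) ->
  (forall i : Vert n, act (tg k m r) (vert i) = vert (i + d%:R)) ->
  (forall i : Vert n, act (tg k m r) (arr_a i) = kq_scale (mu i) (arr_a (i + d%:R))) ->
  (forall i : Vert n, act (tg k m r) (arr_as i) = kq_scale (mus i) (arr_as (i + d%:R))) ->
  (n != 4%N \/ d != 2%N) ->
  forall (v : Vert n) (b : bool), iter r (sigma lam act) (arrow v b) = kq_zero k n.
Proof.
move=> r_gt1 m_gt0 r_dvd_m lam_prim _ n_gt2 act_alg act_lin _ d_gt0 d_le _ _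
  g_vert g_a g_as n_d_ne42 v b.
have m_gt1 : (1 < m)%N := leq_trans r_gt1 (dvdn_leq m_gt0 r_dvd_m).
have d_ltn : (d < n)%N by lia.
have g_arrow w c : exists c0,
    act (tg k m r) (arrow w c) = kq_scale c0 (arrow (w + d%:R) c).
  case: c; last by exists (mu w); apply: g_a.
  exists (mus (w - 1)); have := g_as (w - 1); rewrite /arr_as subrK.
  by rewrite addrAC subrK.
exact: (iter_sigma_r_arrow m_gt1 r_gt1 act_alg act_lin n_gt2 d_gt0 d_ltn g_vert g_arrow
  n_d_ne42).
Qed.
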